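(* Let $|\mathfrak{X}|\ge2$ and let $\mathbf{D}^{(1)}$ be an $(m_n,n,\mathbf{P})$ unlabeled Markov database. Define the collapsed database $\tilde{\mathbf{D}}^{(1)}$ by $\tilde D^{(1)}_{i,j}=1$ if $D^{(1)}_{i,j}=1$ and $\tilde D^{(1)}_{i,j}=2$ otherwise, and the column histograms $\tilde H^{(1)}_j=\sum_{i=1}^{m_n}\mathbb{1}[\tilde D^{(1)}_{i,j}=2]$ for $j\in[n]$. If $m_n=\omega(n^4)$, then $$\Pr\big(\exists\, i,j\in[n],\ i\neq j,\ \tilde H^{(1)}_i=\tilde H^{(1)}_j\big)\to0\quad\text{as } n\to\infty.$$
   Context: Unlabeled Markov database: for a finite alphabet $\mathfrak{X}=\{1,\dots,|\mathfrak{X}|\}$, an $(m_n,n,\mathbf{P})$ unlabeled Markov database is a random $m_n\times n$ matrix $\mathbf{D}=(D_{i,j})$ with entries in $\mathfrak{X}$ whose rows are i.i.d., each row being a first-order stationary Markov chain $(D_{i,1},\dots,D_{i,n})$ with $D_{i,1}\sim\pi=[u_1,\dots,u_{|\mathfrak{X}|}]$ and transition matrix $\mathbf{P}=\gamma\mathbf{I}+(1-\gamma)\mathbf{U}$, where $\mathbf{I}$ is the identity, $U_{i,j}=u_j>0$ for all $i,j$, $\sum_j u_j=1$, and $\gamma\in\big(-\min_j\frac{u_j}{1-u_j},1\big)$; $\pi$ is the stationary distribution of $\mathbf{P}$. *)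

From HB Require Import structures.
From mathcomp Require Import all_boot all_order all_algebra.
From mathcomp Require Import all_classical all_reals all_analysis.
Set Implicit Arguments. Unset Strict Implicit. Unset Printing Implicit Defensive.
Import Order.TTheory GRing.Theory Num.Theory.
Local Open Scope ring_scope.

(* Alphabet X = {1,...,K} is represented by 'I_K; the symbol "1" of the paper
   is the ordinal with value 0, symbol j+1 is the ordinal with value j. *)

Section MarkovDB.
Variables (R : realType) (K : nat) (u : 'I_K -> R) (gamma : R).

Definition trans (x y : 'I_K) : R :=
  gamma * (x == y)%:R + (1 - gamma) * u y.

Fixpoint chain_prob (x : 'I_K) (s : seq 'I_K) : R :=
  match s with
  | [::] => 1
  | y :: s' => trans x y * chain_prob y s'
  end.

(* probability of a row (D_{i,1},...,D_{i,n}) : D_{i,1} ~ pi = u, then P *)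
Definition row_prob (s : seq 'I_K) : R :=
  match s with
  | [::] => 1
  | x :: s' => u x * chain_prob x s'
  end.

Definition db_prob (m n : nat) (d : {ffun 'I_m -> n.-tuple 'I_K}) : R :=
  \prod_(i < m) row_prob (tval (d i)).

(* column histogram of the collapsed database: number of entries in column j
   that are different from symbol 1 (i.e. collapsed value 2) *)
Definition col_hist (m n : nat) (d : {ffun 'I_m -> n.-tuple 'I_K}) (j : 'I_n) : nat :=
  #|[set i : 'I_m | val (tnth (d i) j) != 0%N]|.

Definition hist_collision (m n : nat) (d : {ffun 'I_m -> n.-tuple 'I_K}) : bool :=
  [exists i : 'I_n, exists j : 'I_n, (i != j) && (col_hist d i == col_hist d j)].

Definition prob_hist_collision (m n : nat) : R :=
  \sum_(d : {ffun 'I_m -> n.-tuple 'I_K} | hist_collision d) db_prob d.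

End MarkovDB.

From HB Require Import structures.
From mathcomp Require Import all_boot all_order all_algebra.
From mathcomp Require Import all_classical all_reals all_analysis.
From mathcomp Require Import zify ring lra.
Set Implicit Arguments. Unset Strict Implicit. Unset Printing Implicit Defensive.
Import Order.TTheory GRing.Theory Num.Theory.

(* For two distinct columns i, j let Z_r = [D_ri <> 1] + [D_rj = 1]; then
   H_i = H_j exactly when Z_1 + ... + Z_m = m, so P(H_i = H_j) is the m-th
   coefficient of p^m, p being the generating polynomial of Z_r.  Both
   P(Z = 0) and P(Z = 2) equal u_1 (1 - u_1) (1 - gamma^|i-j|), which is at least
   delta = u_1 (1 - u_1) (1 - |gamma|) > 0.  Splitting delta (1 + X^2) off p
   exhibits p^m as a binomial mixture of the powers (1 + X^2)^k, whose
   coefficients are at most C(k, k/2) <= 2^k / sqrt(k + 1); hence every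
   coefficient of p^m is at most 1 / sqrt(2 delta (m + 1)).  A union bound over
   the n^2 pairs of columns bounds the collision probability by
   n^2 / sqrt(2 delta (m + 1)), which vanishes when m = omega(n^4). *)

Lemma leq_binS i k : (k.*2 < i)%N -> ('C(i, k) <= 'C(i, k.+1))%N.
Proof.
by move=> lt_ki; rewrite -(@leq_pmul2l k.+1) // mul_bin_left leq_mul //; lia.
Qed.

Lemma leq_bin_mid i k : ('C(i, k) <= 'C(i, i./2))%N.
Proof.
have i_half := odd_double_half i.
wlog le_k_half : k / (k <= i./2)%N.
  move=> mid_max; case: (leqP k i./2) => [/mid_max//|lt_half_k].
  case: (leqP k i) => [le_ki|lt_ik]; last by rewrite bin_small.
  by rewrite -bin_sub // mid_max //; lia.
have mono d : (k + d <= i./2)%N -> ('C(i, k) <= 'C(i, k + d))%N.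
  elim: d => [|d IH] le_kd_half; first by rewrite addn0.
  by apply: leq_trans (IH _) _; rewrite ?addnS ?leq_binS //; lia.
by have := mono (i./2 - k)%N; rewrite subnKC //; apply.
Qed.

Lemma bin_odd_mid j : 'C(j.*2.+1, j) = 'C(j.*2.+1, j.+1).
Proof. by rewrite -bin_sub; [congr binomial|]; lia. Qed.

Lemma mul_bin_odd_mid j : ('C(j.*2.+1, j) * j.+1 = 'C(j.*2, j) * j.*2.+1)%N.
Proof. by rewrite bin_odd_mid mulnC -mul_bin_diag mulnC. Qed.

Lemma mul_bin_double_mid j :
  ('C(j.+1.*2, j.+1) * j.+1 = 'C(j.*2, j) * j.*2.+1 * 2)%N.
Proof.
by rewrite doubleS binS -bin_odd_mid mulnDl mul_bin_odd_mid addnn -mul2n mulnC.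
Qed.

Lemma bin_double_mid_sqr j : ('C(j.*2, j) ^ 2 * j.*2.+1 <= 16 ^ j)%N.
Proof.
elim: j => // j IH; rewrite -(@leq_pmul2r (j.+1 ^ 2)) //.
have -> : ('C(j.+1.*2, j.+1) ^ 2 * j.+1.*2.+1 * j.+1 ^ 2
          = 4 * ('C(j.*2, j) ^ 2 * j.*2.+1) * (j.*2.+1 * j.*2.+3))%N.
  by rewrite mulnAC -expnMn mul_bin_double_mid !doubleS; ring.
have le_odd_prod : (j.*2.+1 * j.*2.+3 <= 4 * j.+1 ^ 2)%N by rewrite -!mul2n; nia.
apply: leq_trans (leq_mul (leq_mul (leqnn 4) IH) le_odd_prod) _.
by rewrite [16 ^ j.+1]expnS; apply: eq_leq; ring.
Qed.

Lemma bin_mid_sqr i : ('C(i, i./2) ^ 2 * i.+1 <= 4 ^ i)%N.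
Proof.
have [j [->|->]] : exists j, i = j.*2 \/ i = j.*2.+1.
  exists i./2; have := odd_double_half i; case: (odd i) => /= ?; [right|left]; lia.
  by rewrite doubleK [4 ^ _](_ : _ = 16 ^ j)%N ?bin_double_mid_sqr // -mul2n expnM.
rewrite /= uphalf_double -(@leq_pmul2r (j.+1 ^ 2)) //.
have -> : ('C(j.*2.+1, j) ^ 2 * j.*2.+2 * j.+1 ^ 2
          = 'C(j.*2, j) ^ 2 * j.*2.+1 * (j.*2.+1 * j.*2.+2))%N.
  by rewrite mulnAC -expnMn mul_bin_odd_mid; ring.
have le_prod : (j.*2.+1 * j.*2.+2 <= 4 * j.+1 ^ 2)%N by rewrite -!mul2n; nia.
apply: leq_trans (leq_mul (bin_double_mid_sqr j) le_prod) _.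
rewrite [4 ^ _]expnS [4 ^ _](_ : _ = 16 ^ j)%N; last by rewrite -mul2n expnM.
by apply: eq_leq; ring.
Qed.

Local Open Scope ring_scope.

Section BinomialWeights.
Variable R : realFieldType.
Implicit Types q : R.

Definition binpmf q m i : R := 'C(m, i)%:R * q ^+ i * (1 - q) ^+ (m - i).

Lemma binpmf_ge0 q m i : 0 <= q <= 1 -> 0 <= binpmf q m i.
Proof.
by case/andP=> q_ge0 q_le1; rewrite !mulr_ge0 ?exprn_ge0 ?subr_ge0.
Qed.

Lemma sum_binpmf q m : \sum_(i < m.+1) binpmf q m i = 1.
Proof.
transitivity ((1 - q + q) ^+ m); last by rewrite subrK expr1n.
by rewrite exprDn; apply: eq_bigr => i _; rewrite /binpmf -mulr_natl; ring.
Qed.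

(* For B ~ Bin(m, q): E[1 / (B + 1)] = (1 - (1 - q) ^ (m + 1)) / ((m + 1) q). *)
Lemma binpmf_harmonic q m : q <= 1 ->
  m.+1%:R * q * \sum_(i < m.+1) binpmf q m i / i.+1%:R <= 1.
Proof.
move=> q_le1; set s := 1 - q.
suff -> : m.+1%:R * q * \sum_(i < m.+1) binpmf q m i / i.+1%:R
          = (s + q) ^+ m.+1 - s ^+ m.+1.
  by rewrite subrK expr1n lerBlDr lerDl exprn_ge0 ?subr_ge0.
rewrite exprDn [in RHS]big_ord_recl subn0 bin0 expr0 mulr1 mulr1n.
rewrite addrAC subrr add0r mulr_sumr; apply: eq_bigr => i _.
rewrite lift0 /binpmf subSS -[in RHS]mulr_natr exprS.
have i1_neq0 : i.+1%:R != 0 :> R by rewrite pnatr_eq0.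
have -> : 'C(m.+1, i.+1)%:R = m.+1%:R * 'C(m, i)%:R / i.+1%:R :> R.
  by rewrite -natrM (mul_bin_diag m.+1 i) natrM mulrC mulrA (mulVf i1_neq0) mul1r.
by field; rewrite -mulrS.
Qed.

End BinomialWeights.

Section NonnegCoefPoly.
Variable R : realFieldType.
Implicit Types p q : {poly R}.

Definition nonneg_coef p := forall k, 0 <= p`_k.

Lemma nonneg_coefM p q : nonneg_coef p -> nonneg_coef q -> nonneg_coef (p * q).
Proof. by move=> p_ge0 q_ge0 k; rewrite coefM sumr_ge0 // => j _; rewrite mulr_ge0. Qed.

Lemma nonneg_coefX p k : nonneg_coef p -> nonneg_coef (p ^+ k).
Proof.
move=> p_ge0; elim: k => [|k IH]; last by rewrite exprS; apply: nonneg_coefM.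
by move=> i; rewrite coef1; case: (i == 0)%N.
Qed.

Lemma sum_coef_le_horner1 q i : nonneg_coef q -> \sum_(j < i) q`_j <= q.[1].
Proof.
move=> q_ge0; set n := maxn i (size q).
rewrite (@horner_coef_wide _ n) ?leq_maxr // (big_ord_widen n (fun j => q`_j)) ?leq_maxl //.
rewrite big_mkcond /=; apply: ler_sum => j _.
by rewrite expr1n mulr1; case: ifP.
Qed.

Lemma coef0_add_coef2_le p : nonneg_coef p -> p`_0 + p`_2 <= p.[1].
Proof.
move=> p_ge0; apply: le_trans (sum_coef_le_horner1 3 p_ge0).
by rewrite !big_ord_recr big_ord0 /= add0r lerD2r lerDl.
Qed.

Lemma coefM_le_horner1 p q (M : R) i : nonneg_coef p -> nonneg_coef q ->
  (forall k, p`_k <= M) -> (p * q)`_i <= M * q.[1].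
Proof.
move=> p_ge0 q_ge0 p_leM; rewrite coefMr.
apply: le_trans (_ : \sum_(j < i.+1) M * q`_j <= _).
  by apply: ler_sum => j _; rewrite ler_wpM2r.
by rewrite -mulr_sumr ler_wpM2l ?sum_coef_le_horner1 // (le_trans (p_ge0 0%N)).
Qed.

Lemma coef_1DXn2_exp i k : ((1 + 'X^2 : {poly R}) ^+ i)`_k <= 'C(i, i./2)%:R.
Proof.
rewrite addrC exprD1n coef_sum.
under eq_bigr => j _ do rewrite coefMn -exprM coefXn.
case: (ltnP k./2 i.+1) => [lt_half_i|le_i_half]; last first.
  rewrite big1 // => j _; case: eqP => [k_eq|]; last by rewrite mul0rn.
  by move: le_i_half; rewrite k_eq mul2n doubleK leqNgt ltn_ord.
rewrite (bigD1 (Ordinal lt_half_i)) //= big1 ?addr0 => [|j j_neq].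
  by case: eqP => _; rewrite ?mulr1n ?mul0rn ?ler_nat ?leq_bin_mid.
case: eqP => [k_eq|]; last by rewrite mul0rn.
by move/eqP: j_neq; case; apply: val_inj; rewrite /= k_eq mul2n doubleK.
Qed.

Lemma sqr_wmean_le (I : finType) (w h : I -> R) :
  (forall i, 0 <= w i) -> \sum_i w i = 1 ->
  (\sum_i w i * h i) ^+ 2 <= \sum_i w i * h i ^+ 2.
Proof.
move=> w_ge0 sum_w; set S := \sum_i w i * h i.
have : 0 <= \sum_i w i * (h i - S) ^+ 2 by rewrite sumr_ge0 // => i _; rewrite mulr_ge0 ?sqr_ge0.
have -> : \sum_i w i * (h i - S) ^+ 2
          = \sum_i w i * h i ^+ 2 - 2 * S * S + S ^+ 2 * \sum_i w i.
  rewrite (eq_bigr (fun i => w i * h i ^+ 2 - 2 * S * (w i * h i) + S ^+ 2 * w i)).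
    by rewrite !big_split /= sumrN -!mulr_sumr.
  by move=> i _; ring.
rewrite sum_w; lra.
Qed.

Definition mid_ratio i : R := 'C(i, i./2)%:R / 2 ^+ i.

Lemma mid_ratio_sqr i : mid_ratio i ^+ 2 * i.+1%:R <= 1.
Proof.
have : ('C(i, i./2) ^ 2 * i.+1)%:R <= ((2 ^ i) ^ 2)%:R :> R.
  by rewrite ler_nat expnAC; exact: bin_mid_sqr.
rewrite natrM !natrX => bound.
by rewrite /mid_ratio expr_div_n mulrAC ler_pdivrMr ?exprn_gt0 // mul1r.
Qed.

Lemma coef_exp_le_mixture p d m l : nonneg_coef p -> p.[1] = 1 ->
  0 <= d -> d <= p`_0 -> d <= p`_2 ->
  (p ^+ m)`_l <= \sum_(i < m.+1) binpmf (2 * d) m i * mid_ratio i.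
Proof.
move=> p_ge0 p1 d_ge0 d_le_p0 d_le_p2; set F : {poly R} := 1 + 'X^2.
set r := p - d *: F.
have F_ge0 : nonneg_coef F by move=> k; rewrite coefD coef1 coefXn addr_ge0.
have r_ge0 : nonneg_coef r.
  move=> k; rewrite coefB coefZ coefD coef1 coefXn subr_ge0.
  by case: k => [|[|[|k]]]; rewrite /= ?addr0 ?add0r ?mulr1 ?mulr0.
have r1 : r.[1] = 1 - 2 * d by rewrite !hornerE p1 expr1n; ring.
rewrite -(subrK (d *: F) p) -/r exprDn coef_sum; apply: ler_sum => i _.
rewrite coefMn exprZn mulrC -scalerAl coefZ.
have := coefM_le_horner1 l (nonneg_coefX i F_ge0) (nonneg_coefX (m - i) r_ge0)
  (coef_1DXn2_exp i).
rewrite horner_exp r1 => coef_le.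
apply: le_trans (_ : (d ^+ i * ('C(i, i./2)%:R * (1 - 2 * d) ^+ (m - i))) *+ 'C(m, i) <= _).
  by rewrite ler_wMn2r // ler_wpM2l ?exprn_ge0.
rewrite /binpmf /mid_ratio exprMn -mulr_natl.
have pow2_neq0 : (2 : R) ^+ i != 0 by rewrite expf_neq0 ?pnatr_eq0.
by rewrite le_eqVlt; apply/orP; left; apply/eqP; field.
Qed.

Lemma coef_exp_sqr_le p d m l : nonneg_coef p -> p.[1] = 1 ->
  0 <= d -> d <= p`_0 -> d <= p`_2 ->
  m.+1%:R * (2 * d) * (p ^+ m)`_l ^+ 2 <= 1.
Proof.
move=> p_ge0 p1 d_ge0 d_le_p0 d_le_p2.
have q_le1 : 2 * d <= 1 by have := coef0_add_coef2_le p_ge0; rewrite p1; lra.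
have w_ge0 i : 0 <= binpmf (2 * d) m i by rewrite binpmf_ge0 // mulr_ge0.
apply: le_trans (binpmf_harmonic m q_le1); rewrite ler_wpM2l ?mulr_ge0 //.
apply: le_trans (_ : \sum_(i < m.+1) binpmf (2 * d) m i * mid_ratio i ^+ 2 <= _).
  apply: le_trans (sqr_wmean_le (fun i : 'I_m.+1 => mid_ratio i)
    (fun i => w_ge0 i) (sum_binpmf _ _)).
  rewrite !expr2 ler_pM ?nonneg_coefX ?coef_exp_le_mixture //.
apply: ler_sum => i _; rewrite ler_wpM2l // -[X in _ <= X]mul1r ler_pdivlMr //.
exact: mid_ratio_sqr.
Qed.

End NonnegCoefPoly.

Lemma big_tupleS (V : nmodType) (T : finType) n (F : seq T -> V) :
  \sum_(s : n.+1.-tuple T) F s = \sum_(x : T) \sum_(s : n.-tuple T) F (x :: s).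
Proof.
rewrite pair_big /= (reindex (fun p : T * n.-tuple T => [tuple of p.1 :: p.2])) //.
exists (fun t : n.+1.-tuple T => (thead t, [tuple of behead t])).
  by move=> [x t] _ /=; congr pair; apply: val_inj.
by move=> t _; rewrite /= [in RHS](tuple_eta t).
Qed.

Lemma big_tuple0 (V : nmodType) (T : finType) (F : seq T -> V) :
  \sum_(s : 0.-tuple T) F s = F [::].
Proof. by rewrite (big_pred1 [tuple]) // => t /=; apply/esym/eqP; apply: tuple0. Qed.

Lemma sum_delta_mull (S : pzSemiRingType) (T : finType) (x : T) (F : T -> S) :
  \sum_y (x == y)%:R * F y = F x.
Proof.
rewrite (bigD1 x) //= eqxx mul1r big1 ?addr0 // => y y_neq.
by rewrite eq_sym (negbTE y_neq) mul0r.
Qed.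

Section RowMoments.
Variables (R : realType) (K : nat) (u : 'I_K -> R) (gamma : R) (o : 'I_K).
Hypothesis sum_u : \sum_j u j = 1.

Definition ind (y : 'I_K) : R := (y == o)%:R.

(* P^k = gamma^k I + (1 - gamma^k) U, whose column o is the following. *)
Definition trans_pow_o k x : R := u o + gamma ^+ k * (ind x - u o).

Definition chain_mean L x (phi : seq 'I_K -> R) : R :=
  \sum_(s : L.-tuple 'I_K) chain_prob u gamma x s * phi s.

Definition row_mean n (phi : seq 'I_K -> R) : R :=
  \sum_(t : n.-tuple 'I_K) row_prob u gamma t * phi t.

Lemma sum_mul_ind (F : 'I_K -> R) : \sum_y F y * ind y = F o.
Proof.
by under eq_bigr => y _ do rewrite mulrC /ind eq_sym; apply: sum_delta_mull.
Qed.

Lemma sum_trans x : \sum_y trans u gamma x y = 1.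
Proof.
rewrite /trans big_split /= -!mulr_sumr sum_u.
by under eq_bigr => y _ do rewrite -[_%:R]mulr1; rewrite sum_delta_mull; ring.
Qed.

Lemma sum_trans_ind x : \sum_y trans u gamma x y * ind y = trans_pow_o 1 x.
Proof. by rewrite sum_mul_ind /trans /trans_pow_o /ind eq_sym; ring. Qed.

Lemma sum_trans_pow_o k x :
  \sum_y trans u gamma x y * trans_pow_o k y = trans_pow_o k.+1 x.
Proof.
rewrite (eq_bigr (fun y => (u o - gamma ^+ k * u o) * trans u gamma x y
                          + gamma ^+ k * (trans u gamma x y * ind y))).
  by rewrite big_split /= -!mulr_sumr sum_trans sum_trans_ind /trans_pow_o expr1 exprS; ring.
by move=> y _; rewrite /trans_pow_o; ring.
Qed.

Lemma ind_mul_trans_pow_o k y : ind y * trans_pow_o k y = ind y * trans_pow_o k o.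
Proof. by rewrite /ind; case: eqP => [->|_]; rewrite ?mul0r. Qed.

Lemma sum_u_trans_pow_o k : \sum_x u x * trans_pow_o k x = u o.
Proof.
rewrite (eq_bigr (fun x => (u o - gamma ^+ k * u o) * u x + gamma ^+ k * (u x * ind x))).
  by rewrite big_split /= -!mulr_sumr sum_u sum_mul_ind; ring.
by move=> x _; rewrite /trans_pow_o; ring.
Qed.

Lemma chain_mean_cons L x phi : chain_mean L.+1 x phi =
  \sum_y trans u gamma x y * chain_mean L y (fun s => phi (y :: s)).
Proof.
rewrite /chain_mean (big_tupleS _ (fun s => chain_prob u gamma x s * phi s)).
by apply: eq_bigr => y _; rewrite mulr_sumr; apply: eq_bigr => s _; rewrite mulrA.
Qed.

Lemma chain_meanZ L x c phi : chain_mean L x (fun s => c * phi s) = c * chain_mean L x phi.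
Proof. by rewrite /chain_mean mulr_sumr; apply: eq_bigr => s _; ring. Qed.

Lemma chain_mean_cst L x c : chain_mean L x (fun _ => c) = c.
Proof.
rewrite -[c]mulr1 -[LHS]/(chain_mean L x (fun _ => c * 1)) chain_meanZ; congr (_ * _).
elim: L x => [|L IH] x.
  by rewrite /chain_mean (big_tuple0 (fun s => chain_prob u gamma x s * 1)) mulr1.
by rewrite chain_mean_cons; under eq_bigr => y _ do rewrite IH mulr1; rewrite sum_trans.
Qed.

Lemma chain_mean_ind k L x : (k < L)%N ->
  chain_mean L x (fun s => ind (nth o s k)) = trans_pow_o k.+1 x.
Proof.
elim: k L x => [|k IH] [|L] x //= lt_kL; rewrite chain_mean_cons.
  by under eq_bigr => y _ do rewrite /= chain_mean_cst; rewrite sum_trans_ind.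
by under eq_bigr => y _ do rewrite /= IH //; rewrite sum_trans_pow_o.
Qed.

Lemma chain_mean_ind2 k l L x : (k < l)%N -> (l < L)%N ->
  chain_mean L x (fun s => ind (nth o s k) * ind (nth o s l))
  = trans_pow_o k.+1 x * trans_pow_o (l - k) o.
Proof.
elim: k l L x => [|k IH] [|l] [|L] x //= lt_kl lt_lL; rewrite chain_mean_cons.
  under eq_bigr => y _ do rewrite /= chain_meanZ chain_mean_ind // ind_mul_trans_pow_o mulrA.
  by rewrite -mulr_suml sum_trans_ind subn0.
under eq_bigr => y _ do rewrite /= IH // mulrA.
by rewrite -mulr_suml sum_trans_pow_o.
Qed.

Lemma row_mean_cons L phi :
  row_mean L.+1 phi = \sum_x u x * chain_mean L x (fun s => phi (x :: s)).
Proof.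
rewrite /row_mean (big_tupleS _ (fun s => row_prob u gamma s * phi s)).
by apply: eq_bigr => x _; rewrite /chain_mean mulr_sumr; apply: eq_bigr => s _; rewrite mulrA.
Qed.

Lemma row_mean1 n : row_mean n (fun _ => 1) = 1.
Proof.
case: n => [|L].
  by rewrite /row_mean (big_tuple0 (fun s => row_prob u gamma s * 1)) mulr1.
by rewrite row_mean_cons; under eq_bigr => x _ do rewrite chain_mean_cst mulr1.
Qed.

Lemma row_meanB n phi psi :
  row_mean n (fun s => phi s - psi s) = row_mean n phi - row_mean n psi.
Proof. by rewrite /row_mean -sumrB; apply: eq_bigr => t _; ring. Qed.

Lemma row_mean_ind n i : (i < n)%N -> row_mean n (fun t => ind (nth o t i)) = u o.
Proof.
case: n => [|L] // lt_in; rewrite row_mean_cons.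
case: i lt_in => [|i] lt_in /=.
  by under eq_bigr => x _ do rewrite chain_mean_cst; rewrite sum_mul_ind.
by under eq_bigr => x _ do rewrite chain_mean_ind //; rewrite sum_u_trans_pow_o.
Qed.

Lemma row_mean_ind2 n i j : (i < j)%N -> (j < n)%N ->
  row_mean n (fun t => ind (nth o t i) * ind (nth o t j)) = u o * trans_pow_o (j - i) o.
Proof.
case: n j => [|L] [|j] //; rewrite row_mean_cons => lt_ij lt_jn.
case: i lt_ij => [|i] lt_ij /=.
  under eq_bigr => x _ do rewrite chain_meanZ chain_mean_ind // ind_mul_trans_pow_o mulrA.
  by rewrite -mulr_suml sum_mul_ind subn0.
under eq_bigr => x _ do rewrite chain_mean_ind2 // mulrA.
by rewrite -mulr_suml sum_u_trans_pow_o subSS.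
Qed.

End RowMoments.

Lemma prod_scaleXn (R : comNzRingType) (I : finType) (a : I -> R) (e : I -> nat) :
  \prod_i (a i *: 'X^(e i) : {poly R}) = (\prod_i a i) *: 'X^(\sum_i e i).
Proof.
rewrite -prodrXr; apply: (big_rec3 (fun x y z => x = y *: z)); first by rewrite scale1r.
by move=> i x y z _ ->; rewrite -scalerAl -scalerAr scalerA.
Qed.

Lemma coef_sum_scaleXn_exp (R : comNzRingType) (T : finType) m
    (w : T -> R) (e : T -> nat) k :
  ((\sum_t w t *: 'X^(e t)) ^+ m)`_k =
  \sum_(d : {ffun 'I_m -> T} | (\sum_r e (d r))%N == k) \prod_r w (d r).
Proof.
rewrite -[in LHS](card_ord m) -prodr_const bigA_distr_bigA /=.
by under eq_bigr => d _ do rewrite prod_scaleXn; rewrite coef_sumMXn.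
Qed.

Lemma eqn_sum_negb m (a b : 'I_m -> bool) :
  ((\sum_r a r == \sum_r b r) = (\sum_r (a r + ~~ b r) == m))%N.
Proof.
have sum_bnegb : (\sum_r ~~ b r + \sum_r b r = m)%N.
  rewrite -big_split /=; under eq_bigr => r _ do rewrite addn_negb.
  by rewrite sum1_card card_ord.
by rewrite big_split /= -(eqn_add2r (\sum_r ~~ b r)) [X in _ == X]addnC sum_bnegb.
Qed.

Lemma sum_exists_le (R : numDomainType) (T I : finType)
    (F : T -> R) (P : I -> pred T) :
  (forall t, 0 <= F t) -> \sum_(t | [exists i, P i t]) F t <= \sum_i \sum_(t | P i t) F t.
Proof.
move=> F_ge0; under [X in _ <= X]eq_bigr => i _ do rewrite big_mkcond.
rewrite exchange_big big_mkcond /=; apply: ler_sum => t _.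
case: existsP => [[i0 P_i0]|_]; last by rewrite sumr_ge0 // => i _; case: ifP.
by rewrite (bigD1 i0) //= P_i0 lerDl sumr_ge0 // => i _; case: ifP.
Qed.

Lemma card_set_sum_nat (T : finType) (P : pred T) : #|[set x | P x]| = (\sum_x P x)%N.
Proof. by rewrite -sum1dep_card big_mkcond; apply: eq_bigr => x _; case: (P x). Qed.

Section ColumnPair.
Variables (R : realType) (K n : nat) (u : 'I_K -> R) (gamma : R) (i j : 'I_n).

Definition pair_stat (t : n.-tuple 'I_K) : nat :=
  (val (tnth t i) != 0%N) + (val (tnth t j) == 0%N).

Definition pair_pgf : {poly R} :=
  \sum_(t : n.-tuple 'I_K) row_prob u gamma t *: 'X^(pair_stat t).

Lemma prob_col_hist_eq m :
  \sum_(d : {ffun 'I_m -> n.-tuple 'I_K} | col_hist d i == col_hist d j) db_prob u gamma d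
  = (pair_pgf ^+ m)`_m.
Proof.
rewrite coef_sum_scaleXn_exp; apply: eq_bigl => d.
rewrite /col_hist !card_set_sum_nat eqn_sum_negb.
by under eq_bigr => r _ do rewrite negbK.
Qed.

Variable o : 'I_K.
Hypotheses (o_val : val o = 0%N) (sum_u : \sum_k u k = 1).

Let ind_at (s : seq 'I_K) k := ind R o (nth o s k).

Lemma pair_pgf_horner1 : pair_pgf.[1] = 1.
Proof.
rewrite horner_sum -[RHS](row_mean1 gamma sum_u n); apply: eq_bigr => t _.
by rewrite hornerZ hornerXn expr1n.
Qed.

Lemma pair_pgf_coef02_mean :
  pair_pgf`_0 = row_mean u gamma n (fun s => ind_at s i - ind_at s i * ind_at s j) /\
  pair_pgf`_2 = row_mean u gamma n (fun s => ind_at s j - ind_at s i * ind_at s j).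
Proof.
split; rewrite coef_sumMXn /row_mean big_mkcond /=; apply: eq_bigr => t _;
  rewrite /pair_stat /ind_at /ind !(tnth_nth o) -!val_eqE /= o_val;
  by case: (nth o t i == 0 :> nat); case: (nth o t j == 0 :> nat);
    rewrite /= ?mulr1n ?mulr0n; ring.
Qed.

Lemma row_mean_ind_pair : i != j -> exists2 k, (0 < k)%N &
  row_mean u gamma n (fun s => ind_at s i * ind_at s j) = u o * trans_pow_o u gamma o k o.
Proof.
case: (ltngtP i j) => [lt_ij|lt_ji|/val_inj->]; last by rewrite eqxx.
- by exists (j - i)%N; [lia | apply: row_mean_ind2].
- exists (i - j)%N; first lia.
  rewrite -(row_mean_ind2 gamma o sum_u lt_ji (ltn_ord i)).
  by apply: eq_bigr => t _; congr (_ * _); apply: mulrC.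
Qed.

Lemma pair_pgf_coef02 : i != j -> exists2 k, (0 < k)%N &
  pair_pgf`_0 = u o * (1 - u o) * (1 - gamma ^+ k) /\
  pair_pgf`_2 = u o * (1 - u o) * (1 - gamma ^+ k).
Proof.
move=> neq_ij; have [k k_gt0 mean_ij] := row_mean_ind_pair neq_ij.
have [-> ->] := pair_pgf_coef02_mean; exists k => //.
rewrite !row_meanB mean_ij !row_mean_ind ?ltn_ord // /trans_pow_o /ind eqxx /=.
by split; ring.
Qed.

End ColumnPair.

Lemma exists_ord_neq n (x : 'I_n) : (1 < n)%N -> exists y : 'I_n, y != x.
Proof.
move=> n_gt1; set y0 := Ordinal (ltnW n_gt1).
have [->|neq_x] := eqVneq x y0; last by exists y0; rewrite eq_sym.
by exists (Ordinal n_gt1); apply/eqP => /(congr1 val).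
Qed.

Section Collision.
Variables (R : realType) (K : nat) (u : 'I_K -> R) (gamma : R).
Hypotheses (K_gt1 : (1 < K)%N) (u_gt0 : forall k, 0 < u k) (sum_u : \sum_k u k = 1).
Hypotheses (gamma_gt : forall k, - (u k / (1 - u k)) < gamma) (gamma_lt1 : gamma < 1).

Lemma add_u_le1 x y : x != y -> u x + u y <= 1.
Proof.
move=> neq_xy; rewrite -sum_u (bigD1 x) //= (bigD1 y) 1?eq_sym //= addrA lerDl.
by rewrite sumr_ge0 // => k _; apply: ltW.
Qed.

Lemma u_lt1 x : u x < 1.
Proof.
have [y neq_yx] := exists_ord_neq x K_gt1.
by have := add_u_le1 neq_yx; have := u_gt0 y; lra.
Qed.

Lemma trans_ge0 x y : 0 <= trans u gamma x y.
Proof.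
rewrite /trans; case: eqP => [<-|_]; last by rewrite mulr0 add0r mulr_ge0 ?subr_ge0 ?ltW.
have := gamma_gt x; rewrite -mulNr ltr_pdivrMr ?subr_gt0 ?u_lt1 //= mulr1.
by have := u_gt0 x; nra.
Qed.

Lemma normr_gamma_lt1 : `|gamma| < 1.
Proof.
rewrite ltr_norml gamma_lt1 andbT.
have [z uz_le] : exists z, u z <= 1 - u z.
  pose x := Ordinal (ltnW K_gt1); have [y neq_yx] := exists_ord_neq x K_gt1.
  have := add_u_le1 neq_yx; case: (lerP (u x) (1 - u x)) => ? ?; [exists x | exists y]; lra.
have : u z / (1 - u z) <= 1 by rewrite ler_pdivrMr ?subr_gt0 ?u_lt1 // mul1r.
by have := gamma_gt z; lra.
Qed.

Lemma row_prob_ge0 s : 0 <= row_prob u gamma s.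
Proof.
case: s => [|x s] //=; rewrite mulr_ge0 ?(ltW (u_gt0 x)) //.
by elim: s x => [|y s IH] x //=; rewrite mulr_ge0 ?trans_ge0.
Qed.

Lemma db_prob_ge0 m n (d : {ffun 'I_m -> n.-tuple 'I_K}) : 0 <= db_prob u gamma d.
Proof. by rewrite prodr_ge0 // => r _; apply: row_prob_ge0. Qed.

Variable o : 'I_K.
Hypothesis o_val : val o = 0%N.

Definition delta := u o * (1 - u o) * (1 - `|gamma|).

Lemma delta_gt0 : 0 < delta.
Proof. by rewrite !mulr_gt0 ?subr_gt0 ?u_lt1 ?normr_gamma_lt1. Qed.

Lemma scaled_delta_gt0 m : 0 < m.+1%:R * (2 * delta).
Proof. by rewrite (pmulr_rgt0 _ (ltr0Sn _ m)) (pmulr_rgt0 _ (ltr0Sn _ 1)) delta_gt0. Qed.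

Lemma prob_col_hist_eq_le m n (i j : 'I_n) : i != j ->
  Num.sqrt (m.+1%:R * (2 * delta)) *
  \sum_(d : {ffun 'I_m -> n.-tuple 'I_K} | col_hist d i == col_hist d j) db_prob u gamma d
  <= 1.
Proof.
move=> neq_ij; rewrite prob_col_hist_eq.
have [k k_gt0 [coef0 coef2]] := pair_pgf_coef02 gamma o_val sum_u neq_ij.
have delta_le : delta <= u o * (1 - u o) * (1 - gamma ^+ k).
  rewrite ler_wpM2l ?mulr_ge0 ?subr_ge0 ?(ltW (u_gt0 o)) ?(ltW (u_lt1 o)) // lerB //.
  rewrite (le_trans (ler_norm _)) // normrX -[leRHS]expr1 ler_wiXn2l //.
  exact: ltW normr_gamma_lt1.
have pgf_ge0 : nonneg_coef (pair_pgf u gamma i j).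
  by move=> l; rewrite coef_sumMXn sumr_ge0 // => t _; apply: row_prob_ge0.
set c := (pair_pgf u gamma i j ^+ m)`_m; have c_ge0 : 0 <= c by apply: nonneg_coefX.
have := coef_exp_sqr_le m m pgf_ge0 (pair_pgf_horner1 gamma i j sum_u) (ltW delta_gt0).
rewrite coef0 coef2 -/c => /(_ delta_le delta_le) /ler_wsqrtr.
by rewrite sqrtr1 (sqrtrM _ (ltW (scaled_delta_gt0 m))) sqrtr_sqr ger0_norm.
Qed.

Lemma prob_hist_collision_le m n :
  Num.sqrt (m.+1%:R * (2 * delta)) * prob_hist_collision u gamma m n <= n%:R ^+ 2.
Proof.
set s := Num.sqrt _; have s_ge0 : 0 <= s := sqrtr_ge0 _.
pose P i j (d : {ffun 'I_m -> n.-tuple 'I_K}) := (i != j) && (col_hist d i == col_hist d j).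
apply: le_trans (_ : s * \sum_i \sum_j \sum_(d | P i j d) db_prob u gamma d <= _).
  rewrite ler_wpM2l // /prob_hist_collision /hist_collision.
  apply: le_trans (sum_exists_le (fun i d => [exists j, P i j d]) (@db_prob_ge0 m n)) _.
  by apply: ler_sum => i _; apply: sum_exists_le (P i) (@db_prob_ge0 m n).
have -> : n%:R ^+ 2 = \sum_(i < n) \sum_(j < n) (1 : R).
  by rewrite !sumr_const card_ord -mulrnA natrM expr2.
rewrite mulr_sumr; apply: ler_sum => i _; rewrite mulr_sumr; apply: ler_sum => j _.
have [<-|neq_ij] := eqVneq i j; first by rewrite big_pred0 ?mulr0 // => d; rewrite /P eqxx.
rewrite (eq_bigl (fun d => col_hist d i == col_hist d j)) => [|d]; last by rewrite /P neq_ij.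
exact: prob_col_hist_eq_le.
Qed.

Lemma prob_hist_collision_lt m n e : 0 < e ->
  n%:R ^+ 4 < 2 * delta * e ^+ 2 * m%:R -> `|prob_hist_collision u gamma m n| < e.
Proof.
move=> e_gt0 n_small; set A := m.+1%:R * (2 * delta).
rewrite ger0_norm; last by apply: sumr_ge0 => d _; apply: db_prob_ge0.
have n2_lt : n%:R ^+ 2 < Num.sqrt A * e.
  have n2_ge0 : 0 <= n%:R ^+ 2 :> R by rewrite exprn_ge0.
  have sAe_ge0 : 0 <= Num.sqrt A * e by rewrite mulr_ge0 ?sqrtr_ge0 ?ltW.
  rewrite -(ltr_sqr n2_ge0 sAe_ge0) [X in _ < X]exprMn sqr_sqrtr ?(ltW (scaled_delta_gt0 m)) //.
  rewrite -exprM; apply: lt_le_trans n_small _.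
  rewrite [leRHS](_ : _ = 2 * delta * e ^+ 2 * m%:R + 2 * delta * e ^+ 2).
    by rewrite lerDl mulr_ge0 ?sqr_ge0 // mulr_ge0 // ltW // delta_gt0.
  by rewrite /A -natr1; ring.
have sA_gt0 : 0 < Num.sqrt A by rewrite sqrtr_gt0 scaled_delta_gt0.
by rewrite -(ltr_pM2l sA_gt0); apply: le_lt_trans (prob_hist_collision_le m n) n2_lt.
Qed.

End Collision.

Local Open Scope classical_set_scope.
Local Open Scope ring_scope.

Theorem lemma1 (R : realType) (K : nat) (u : 'I_K -> R) (gamma : R)
  (m : nat -> nat)
  (hK : (2 <= K)%N)
  (hu_pos : forall j, 0 < u j)
  (hu_sum : \sum_(j < K) u j = 1)
  (hgamma_lo : forall j, - (u j / (1 - u j)) < gamma)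
  (hgamma_hi : gamma < 1)
  (hm : forall C : R, 0 < C -> \forall n \near \oo, C * (n%:R ^+ 4) < (m n)%:R) :
  (fun n => prob_hist_collision u gamma (m n) n) @ \oo --> (0 : R^o).
Proof.
pose o := Ordinal (ltnW hK).
have delta_pos := delta_gt0 hK hu_pos hu_sum hgamma_lo hgamma_hi o.
apply/cvgr0Pnorm_lt => e e_gt0.
have c_gt0 : 0 < 2 * delta u gamma o * e ^+ 2.
  by rewrite (pmulr_lgt0 _ (exprn_gt0 2 e_gt0)) (pmulr_rgt0 _ (ltr0Sn _ 1)).
have C_gt0 : 0 < (2 * delta u gamma o * e ^+ 2)^-1 by rewrite invr_gt0.
apply: filterS (hm _ C_gt0) => n; rewrite ltr_pdivrMl // => m_large.
exact: (prob_hist_collision_lt hK hu_pos hu_sum hgamma_lo hgamma_hi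
  (erefl : val o = 0%N) e_gt0 m_large).
Qed.
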